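(* Let $K$ be a field of characteristic zero, $x=(x_1,\dots,x_n)$, and let $G\in K[x]^n$ be a Keller map such that $\mathcal{J}G$ is symmetric. Let $i$ be an index such that $\frac{\partial}{\partial x_i}G_i^{(1)}\neq 0$, where $G_i^{(1)}$ is the homogeneous part of degree $1$ of $G_i$. If $G_i=G_i^{(1)}+\big(G_i^{(1)}\big)^2h+c$ for some $c\in K$ and $h\in K[x]$, then $h=0$, and hence $\deg G_i=1$.
   Context: A Keller map is a polynomial map $G\in K[x]^n$ with $\det\mathcal{J}G\in K^{*}$, $\mathcal{J}$ the Jacobian matrix. *)

From HB Require Import structures.
From mathcomp Require Import all_boot all_order all_algebra.
From mathcomp Require Import mpoly.
Set Implicit Arguments. Unset Strict Implicit. Unset Printing Implicit Defensive.
Import GRing.Theory.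
Local Open Scope ring_scope.

Definition homog_part (n : nat) (K : nzRingType) (d : nat) (p : {mpoly K[n]})
  : {mpoly K[n]} :=
  \sum_(m <- msupp p | mdeg m == d) p@_m *: 'X_[m].

(* Total degree (0 for the zero polynomial); msize p = 1 + total degree. *)
Definition mtotdeg (n : nat) (K : nzRingType) (p : {mpoly K[n]}) : nat :=
  (msize p).-1.

Definition jacobian (n : nat) (K : nzRingType) (G : 'I_n -> {mpoly K[n]})
  : 'M[{mpoly K[n]}]_n :=
  \matrix_(i < n, j < n) mderiv j (G i).

Definition keller (n : nat) (K : fieldType) (G : 'I_n -> {mpoly K[n]}) : Prop :=
  exists c : K, c != 0 /\ \det (jacobian G) = c%:MP.

From HB Require Import structures.
From mathcomp Require Import all_boot all_order all_algebra.
From mathcomp Require Import mpoly.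
From mathcomp Require Import perm ring zify.
Set Implicit Arguments. Unset Strict Implicit. Unset Printing Implicit Defensive.

(* Write L for the linear part of G_i, so that every d_j L is a constant a_j
   with a_i != 0, and let C be the cofactor matrix of the Jacobian J.  The
   identity J adj(J) = d I and the derivative in x_i of det J = d, rewritten
   with the symmetry of J, give two linear relations between the first and
   second derivatives of G_i weighted by C.  If G_i = L + L^(k+2) g + c, these
   relations read modulo L say that Q := sum a_l a_j C_lj is congruent to the
   unit a_i d and that (k+2)(k+1) g Q is congruent to 0; in characteristic 0
   this forces L | g.  Hence h is divisible by every power of the nonconstant
   polynomial L, so h = 0 and G_i = L + c has degree 1. *)
Import GRing.Theory.
Local Open Scope ring_scope.

Section Derivations.
Variables (R : comNzRingType) (n : nat).
Implicit Types (p : {mpoly R[n]}) (j : 'I_n).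

Lemma mderiv_natr j k : mderiv j (k%:R : {mpoly R[n]}) = 0.
Proof. by rewrite -mpolyC_nat mderivC. Qed.

Lemma mderivXn j p k : mderiv j (p ^+ k) = k%:R * p ^+ k.-1 * mderiv j p.
Proof.
elim: k => [|k IH]; first by rewrite expr0 -mpolyC1 mderivC !mul0r.
case: k IH => [|k] IH; first by rewrite expr1 expr0 !mul1r.
by rewrite exprS mderivM IH /= exprS -[k.+2]addn1 natrD; ring.
Qed.

Lemma mderiv_prod j (I : eqType) (r : seq I) (F : I -> {mpoly R[n]}) : uniq r ->
  mderiv j (\prod_(i <- r) F i) =
  \sum_(l <- r) mderiv j (F l) * \prod_(i <- r | i != l) F i.
Proof.
elim: r => [|x r IH] /=; first by rewrite !big_nil -mpolyC1 mderivC.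
case/andP => xr ur.
rewrite big_cons mderivM IH // big_cons big_cons eqxx /=.
have -> : \prod_(i <- r | i != x) F i = \prod_(i <- r) F i.
  rewrite big_seq_cond [RHS]big_seq_cond; apply: eq_bigl => i.
  by case ir: (i \in r) => //=; case: eqP => // eix; rewrite -eix ir in xr.
congr (_ + _); rewrite mulr_sumr; apply: eq_big_seq => l lr.
rewrite big_cons; case: eqP => [exl|_]; last by rewrite mulrCA.
by rewrite exl lr in xr.
Qed.

(* Differentiate the Leibniz expansion row by row; each resulting sum is the
   Laplace expansion along the differentiated row. *)
Lemma mderiv_det j (A : 'M[{mpoly R[n]}]_n) :
  mderiv j (\det A) = \sum_k \sum_l mderiv j (A k l) * cofactor A k l.
Proof.
rewrite /determinant raddf_sum /=.
have dsign (s : 'S_n) : mderiv j ((-1) ^+ s : {mpoly R[n]}) = 0.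
  by case: odd_perm; rewrite ?expr1 ?mderivN -mpolyC1 mderivC ?oppr0.
under eq_bigr => s _ do
  rewrite mderivM dsign mul0r add0r mderiv_prod ?index_enum_uniq // mulr_sumr.
rewrite exchange_big /=; apply: eq_bigr => k _.
pose B := \matrix_(i, l) (if i == k then mderiv j (A k l) else A i l).
have cofB l : cofactor B k l = cofactor A k l.
  rewrite /cofactor; congr (_ * \det _); apply/matrixP => a b; rewrite !mxE.
  by rewrite eq_sym (negbTE (neq_lift _ _)).
transitivity (\det B); last first.
  by rewrite (expand_det_row B k); apply: eq_bigr => l _; rewrite cofB mxE eqxx.
rewrite /determinant; apply: eq_bigr => s _.
rewrite [in RHS](bigD1 k) //= /B mxE eqxx !mulrA; congr (_ * _).
by apply: eq_bigr => i ik; rewrite mxE (negbTE ik).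
Qed.

End Derivations.

Section LinearPart.
Variables (R : nzRingType) (n : nat).
Implicit Types (p : {mpoly R[n]}).

Lemma mderiv_homog_part1 p (j : 'I_n) :
  mderiv j (homog_part 1 p) = (p@_(U_(j)%MM))%:MP.
Proof.
have term m : mdeg m == 1%N ->
    mderiv j (p@_m *: 'X_[m]) = (p@_m * (m == U_(j)%MM)%:R)%:MP.
  case/mdeg1P => k /eqP ->; rewrite mderivZ mderivX mnm1E eq_mnm1.
  case: (eqVneq k j) => [->|_]; last by rewrite !mulr0 scale0r scaler0.
  rewrite -[X in (X - _)%MM]add0m addmK mpolyX0 !mulr1 scale1r.
  by rewrite -alg_mpolyC.
rewrite /homog_part raddf_sum /= (eq_bigr _ (fun m => term m)).
rewrite {3}[p]mpolyE raddf_sum /= -rmorph_sum big_mkcond /=.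
congr _%:MP; apply: eq_bigr => m _; rewrite mcoeffZ mcoeffX.
case: (boolP (mdeg m == 1%N)) => // dm; case: eqP => [mU|]; last by rewrite mulr0.
by rewrite mU mdeg1 eqxx in dm.
Qed.
End LinearPart.

Lemma msize_gt1_of_mderiv (R : ringType) (n : nat) (p : {mpoly R[n]}) (j : 'I_n) :
  mderiv j p != 0 -> (1 < msize p)%N.
Proof.
move=> dp; rewrite ltnNge; apply: contra dp => /msize1_polyC ->.
by rewrite mderivC.
Qed.

Lemma mtotdeg_homog_part1_addC (R : nzRingType) (n : nat) (p : {mpoly R[n]})
    (c : R) (j : 'I_n) :
  mderiv j (homog_part 1 p) != 0 -> mtotdeg (homog_part 1 p + c%:MP) = 1%N.
Proof.
set L := homog_part 1 p => hj; rewrite /mtotdeg.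
have nonconst : (1 < msize (L + c%:MP))%N.
  by apply: (@msize_gt1_of_mderiv _ _ _ j); rewrite mderivD mderivC addr0.
have L0 : L + c%:MP != 0 by apply: contraTneq nonconst => ->; rewrite msize0.
suff : (msize (L + c%:MP) <= 2)%N by lia.
rewrite -(mlead_deg L0) ltnS.
have := msuppD_le (mlead_supp L0); rewrite mem_cat => /orP [|].
  case/msupp_sum_le/flattenP => s /mapP [m]; rewrite mem_filter => /andP [/eqP dm _] ->.
  by move/msuppZ_le; rewrite msuppX inE => /eqP ->; rewrite dm.
by rewrite msuppC; case: eqP => // _; rewrite inE => /eqP ->; rewrite mdeg0.
Qed.

Section PowerDivisibility.
Variables (R : idomainType) (n : nat).
Implicit Types (p q : {mpoly R[n]}).

Lemma msize_exp_gt p k : (1 < msize p)%N -> (k < msize (p ^+ k))%N.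
Proof.
move=> p1; have p0 : p != 0 by apply: contraTneq p1 => ->; rewrite msize0.
elim: k => [|k IH]; first by rewrite expr0 msize1.
by rewrite exprS msizeM ?expf_neq0 //; lia.
Qed.

Lemma mpoly_eq0_of_dvd_exp p q : (1 < msize p)%N ->
  (forall k, exists r, q = p ^+ k * r) -> q = 0.
Proof.
move=> p1 dvd_q; have [r qE] := dvd_q (msize q).
apply/eqP; apply: contraTT (msize_exp_gt (msize q) p1) => q0.
have r0 : r != 0 by apply: contraNneq q0 => r0; rewrite qE r0 mulr0.
have p0 : p != 0 by apply: contraTneq p1 => ->; rewrite msize0.
have := msizeM (expf_neq0 (msize q) p0) r0; rewrite -qE -subn1.
have : (0 < msize r)%N by rewrite -(mlead_deg r0).
by move: (msize q) (msize (p ^+ msize q)) (msize r) => x y z; lia.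
Qed.
End PowerDivisibility.

Lemma sum2_lincomb (R : pzSemiRingType) (m n : nat) (x y : R)
    (f f' : 'I_m -> 'I_n -> R) :
  \sum_i \sum_j (x * f i j + y * f' i j) =
  x * \sum_i \sum_j f i j + y * \sum_i \sum_j f' i j.
Proof.
rewrite !mulr_sumr -big_split; apply: eq_bigr => i _.
by rewrite !mulr_sumr -big_split.
Qed.

Section Descent.
Variables (K : fieldType) (n : nat).
Variables (F L g : {mpoly K[n]}) (a : 'I_n -> K) (c d : K) (k : nat).
Variables (i : 'I_n) (C : 'I_n -> 'I_n -> {mpoly K[n]}).
Hypothesis pchar0 : [pchar K] =i pred0.
Hypothesis mderivL : forall j, mderiv j L = (a j)%:MP.
Hypothesis ai0 : a i != 0.
Hypothesis d0 : d != 0.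
Hypothesis FE : F = L + L ^+ k.+2 * g + c%:MP.
Hypothesis adj_row : forall l,
  \sum_j mderiv j F * C l j = (i == l)%:R * d%:MP.
Hypothesis hessian_adj : \sum_l \sum_j mderiv j (mderiv l F) * C l j = 0.

Let Q := \sum_l \sum_j (a l)%:MP * (a j)%:MP * C l j.
Let R1 := \sum_l \sum_j (a l)%:MP * mderiv j g * C l j.
Let W := \sum_l \sum_j (k.+2%:R * ((a l)%:MP * mderiv j g + (a j)%:MP * mderiv l g)
                        + L * mderiv j (mderiv l g)) * C l j.

Lemma mderiv1_descent j :
  mderiv j F = (a j)%:MP * (1 + k.+2%:R * L ^+ k.+1 * g) + L ^+ k.+2 * mderiv j g.
Proof. by rewrite FE !mderivD mderivC mderivM mderivXn mderivL; ring. Qed.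

Lemma mderiv2_descent l j : mderiv l (mderiv j F) =
  L ^+ k * (k.+2%:R * k.+1%:R * g * ((a l)%:MP * (a j)%:MP)
     + L * (k.+2%:R * ((a j)%:MP * mderiv l g + (a l)%:MP * mderiv j g)
            + L * mderiv l (mderiv j g))).
Proof.
have dLX m : mderiv l (L ^+ m.+1) = m.+1%:R * L ^+ m * (a l)%:MP.
  by rewrite mderivXn mderivL.
rewrite mderiv1_descent mderivD mderiv_mulC mderivD (@mderiv_natr _ _ l 1) add0r.
rewrite [mderiv l (_ * g)]mderivM [mderiv l (_ * L ^+ _)]mderivM mderiv_natr.
rewrite [mderiv l (L ^+ _ * _)]mderivM !dLX !exprS; ring.
Qed.

Lemma L_neq0 : L != 0.
Proof. by apply: contraNneq ai0 => L0; rewrite -(mpolyC_eq0 n) -mderivL L0 mderiv0. Qed.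

Lemma adj_row_descent :
  (a i * d)%:MP = Q + L * (k.+2%:R * L ^+ k * g * Q + L ^+ k.+1 * R1).
Proof.
have -> : (a i * d)%:MP = \sum_l (a l)%:MP * \sum_j mderiv j F * C l j.
  under eq_bigr do rewrite adj_row.
  rewrite (bigD1 i) //= big1 ?addr0 => [|l li]; first by rewrite eqxx mul1r mpolyCM.
  by rewrite eq_sym (negbTE li) mul0r mulr0.
transitivity (\sum_l \sum_j ((1 + k.+2%:R * L ^+ k.+1 * g) * ((a l)%:MP * (a j)%:MP * C l j)
                          + L ^+ k.+2 * ((a l)%:MP * mderiv j g * C l j))).
  apply: eq_bigr => l _; rewrite mulr_sumr; apply: eq_bigr => j _.
  by rewrite mderiv1_descent; ring.
by rewrite sum2_lincomb -/Q -/R1 !exprS; ring.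
Qed.

Lemma hessian_adj_descent : k.+2%:R * k.+1%:R * g * Q = - (L * W).
Proof.
apply/eqP; rewrite -subr_eq0 opprK; apply/eqP.
apply: (mulfI (expf_neq0 k L_neq0)); rewrite mulr0 -[RHS]hessian_adj.
transitivity (\sum_l \sum_j (k.+2%:R * k.+1%:R * g * L ^+ k * ((a l)%:MP * (a j)%:MP * C l j)
                          + L ^+ k.+1 * ((k.+2%:R * ((a l)%:MP * mderiv j g
                                + (a j)%:MP * mderiv l g) + L * mderiv j (mderiv l g)) * C l j))).
  by rewrite sum2_lincomb -/Q -/W exprS; ring.
apply: eq_bigr => l _; apply: eq_bigr => j _.
by rewrite mderiv2_descent exprS; ring.
Qed.

Lemma descent : exists g', g = L * g'.
Proof.
pose kappa := k.+2%:R * k.+1%:R * (a i * d).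
have kappa0 : kappa != 0.
  by rewrite !mulf_neq0 // ((pcharf0P _).1 pchar0).
pose V := k.+2%:R * L ^+ k * g * Q + L ^+ k.+1 * R1.
exists ((k.+2%:R * k.+1%:R * g * V - W) * (kappa^-1)%:MP).
have kappaMP0 : kappa%:MP != 0 :> {mpoly K[n]} by rewrite mpolyC_eq0.
apply: (mulIf kappaMP0); rewrite -!mulrA -mpolyCM mulVf // mpolyC1 mulr1.
rewrite /kappa !mpolyCM !mpolyC_nat -mpolyCM adj_row_descent -/V.
transitivity (k.+2%:R * k.+1%:R * g * Q + L * (k.+2%:R * k.+1%:R * g * V)); first ring.
by rewrite hessian_adj_descent; ring.
Qed.
End Descent.

Section SymmetricJacobian.
Variables (R : comNzRingType) (n : nat) (G : 'I_n -> {mpoly R[n]}) (d : R).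
Hypothesis detJ : \det (jacobian G) = d%:MP.

Lemma jacobian_cofactor_row i l :
  \sum_j mderiv j (G i) * cofactor (jacobian G) l j = (i == l)%:R * d%:MP.
Proof.
have /matrixP/(_ i l) := mul_mx_adj (jacobian G).
rewrite detJ !mxE mulr_natl => <-; apply: eq_bigr => j _.
by rewrite !mxE.
Qed.

Hypothesis symJ : (jacobian G)^T = jacobian G.

Lemma symmetric_jacobian_hessian_cofactor i :
  \sum_l \sum_j mderiv j (mderiv l (G i)) * cofactor (jacobian G) l j = 0.
Proof.
have dsym k l : mderiv l (G k) = mderiv k (G l).
  by have /matrixP/(_ k l) := symJ; rewrite !mxE.
transitivity (mderiv i (\det (jacobian G))); last by rewrite detJ mderivC.
rewrite mderiv_det; apply: eq_bigr => l _; apply: eq_bigr => j _.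
by rewrite [jacobian G l j]mxE (mderiv_comm j i) (dsym l i).
Qed.
End SymmetricJacobian.

Theorem corollary7p2 (K : fieldType) (n : nat) (G : 'I_n -> {mpoly K[n]})
  (i : 'I_n) (h : {mpoly K[n]}) (c : K) :
  [pchar K] =i pred0 ->
  keller G ->
  (jacobian G)^T = jacobian G ->
  mderiv i (homog_part 1 (G i)) != 0 ->
  G i = homog_part 1 (G i) + (homog_part 1 (G i)) ^+ 2 * h + c%:MP ->
  h = 0 /\ mtotdeg (G i) = 1%N.
Proof.
move=> pchar0 [d [d0 detJ]] symJ hi GiE.
have h0 : h = 0.
  set L := homog_part 1 (G i) in hi GiE.
  have dL j : mderiv j L = ((G i)@_(U_(j)%MM))%:MP := mderiv_homog_part1 _ j.
  have ai0 : (G i)@_(U_(i)%MM) != 0 by rewrite -(mpolyC_eq0 n) -dL.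
  apply: (mpoly_eq0_of_dvd_exp (msize_gt1_of_mderiv hi)).
  elim=> [|m [r hE]]; first by exists h; rewrite expr0 mul1r.
  have GiE' : G i = L + L ^+ m.+2 * r + c%:MP.
    by rewrite GiE hE mulrA -exprD add2n.
  have [r' rE] := descent pchar0 dL ai0 d0 GiE' (jacobian_cofactor_row detJ i)
    (symmetric_jacobian_hessian_cofactor detJ symJ i).
  by exists r'; rewrite hE rE mulrA -exprSr.
split => //; rewrite GiE h0 mulr0 addr0.
exact: mtotdeg_homog_part1_addC hi.
Qed.
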